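(* Let $m\ge1$, let $r_1\le r_2\le\dots\le r_m$ be positive integers, let $\lambda_1,\dots,\lambda_m>0$, let $P_j$ ($j=1,\dots,m$) be matrices, let $\iota_{ji}>0$ for $1\le i<j\le m$, and let $\varrho_0\ge0$. Then there exist constants $g_i>0$, $i=1,\dots,m$, independent of $\kappa$, and $\theta^*>1$ such that for all $\kappa\ge\theta^*$, $$\frac{\lambda_m}{2}\ell_m^2-\varrho_0\ge\kappa\ell_m,$$ $$\frac{\lambda_i}{4}\ell_i^2-\sum_{j=i+1}^m\frac{2(j-1)|P_j|^2\iota_{ji}^2}{\lambda_j}\ell_j^{2(r_j-r_i+1)}-\varrho_0\ge\kappa\ell_i,\qquad 1\le i\le m-1,$$ hold with $$\ell_m=g_m\kappa,\qquad \ell_i=g_i\,(\ell_{i+1})^{r_{i+1}-r_i+1}\ \text{ for }1\le i\le m-1.$$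
   Context: $|\cdot|$ denotes the Euclidean norm / induced matrix norm. In the paper, $\lambda_i$, $P_j$ are those of a preceding Lyapunov-type lemma, $\iota_{ji}$ are bounds on interconnection gains, and $\varrho_0=\lambda_{\min}|P|^2\mu_0^2|K|^2\delta_2^2/8$; the claim concerns these given constants. *)

From HB Require Import structures.
From mathcomp Require Import all_boot all_order all_algebra.
Set Implicit Arguments. Unset Strict Implicit. Unset Printing Implicit Defensive.
Import Order.TTheory GRing.Theory Num.Theory.
Local Open Scope ring_scope.

(* ellrev m r g kappa k = ell_(m-k), computed downward from ell_m = g_m kappa,
   ell_i = g_i * ell_(i+1)^(r_(i+1) - r_i + 1). *)
Fixpoint ellrev (R : realFieldType) (m : nat) (r : nat -> nat) (g : nat -> R)
    (kappa : R) (k : nat) : R :=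
  match k with
  | 0 => g m * kappa
  | k'.+1 => let i := (m - k'.+1)%N in
             g i * (ellrev m r g kappa k') ^+ (r i.+1 - r i + 1)%N
  end.

Definition ell (R : realFieldType) (m : nat) (r : nat -> nat) (g : nat -> R)
    (kappa : R) (i : nat) : R := ellrev m r g kappa (m - i).

From HB Require Import structures.
From mathcomp Require Import all_boot all_order all_algebra.
From mathcomp Require Import ring lra zify.
Import Order.TTheory GRing.Theory Num.Theory.
Local Open Scope ring_scope.

(* Take g_i = 4 (S_i + rho0 + 1) / lambda_i + 1, where S_i is the sum of the
   coefficients of the i-th inequality, and theta = 2.  All gains are >= 1, so
   every ell_j is >= kappa >= 1, and since (a+1)(b+1) >= a+b+1 the powers
   ell_j^(r_j - r_i + 1) decrease in j; hence the whole sum is bounded by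
   S_i X^2 with X = ell_(i+1)^(r_(i+1) - r_i + 1) and ell_i = g_i X.  The choice
   of g_i makes (lambda_i/4) (g_i X)^2 dominate S_i X^2 + rho0 + kappa g_i X. *)

Section Gain.
Context {R : realFieldType}.

Definition gain (a s rho : R) : R := 4 * (s + rho + 1) / a + 1.

Lemma gain_ge1 (a s rho : R) : 0 < a -> 0 <= s -> 0 <= rho -> 1 <= gain a s rho.
Proof.
move=> a_gt0 s_ge0 rho_ge0; rewrite /gain lerDr.
by apply: divr_ge0; lra.
Qed.

Lemma gain_dominates {a s rho kappa X : R} :
  0 < a -> 0 <= s -> 0 <= rho -> 1 <= X -> kappa <= X ->
  kappa * (gain a s rho * X) <= a / 4 * (gain a s rho * X) ^+ 2 - s * X ^+ 2 - rho.
Proof.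
move=> a_gt0 s_ge0 rho_ge0 X_ge1 kappa_leX.
have G_ge1 : 1 <= gain a s rho by exact: gain_ge1.
have aG : a * gain a s rho = 4 * (s + rho + 1) + a.
  by rewrite /gain mulrDr mulr1 mulrCA divff ?mulr1 // gt_eqF.
set G := gain a s rho in G_ge1 aG *.
have -> : a / 4 * (G * X) ^+ 2 = (s + rho + 1 + a / 4) * G * X ^+ 2.
  have -> : s + rho + 1 + a / 4 = a * G / 4 by rewrite aG; field.
  by rewrite expr2; ring.
have XX_ge1 : 1 <= X ^+ 2 by rewrite expr2; nra.
have GXX_geX : X ^+ 2 <= G * X ^+ 2 by nra.
have kGX : kappa * (G * X) <= G * X ^+ 2 by rewrite expr2; nra.
nra.
Qed.

Lemma gain_dominates_top {a s rho kappa : R} :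
  0 < a -> 0 <= s -> 0 <= rho -> 1 <= kappa ->
  kappa * (gain a s rho * kappa) <= a / 2 * (gain a s rho * kappa) ^+ 2 - rho.
Proof.
move=> a_gt0 s_ge0 rho_ge0 kappa_ge1.
have := gain_dominates a_gt0 s_ge0 rho_ge0 kappa_ge1 (lexx kappa).
have : 0 <= a / 4 * (gain a s rho * kappa) ^+ 2 by rewrite mulr_ge0 ?sqr_ge0 ?divr_ge0 ?ltW.
have : 0 <= s * kappa ^+ 2 by rewrite mulr_ge0 ?sqr_ge0.
lra.
Qed.

Lemma expr_le_mul_exprS (c y : R) (a b : nat) : 1 <= c -> 1 <= y ->
  y ^+ (a + b).+1 <= (c * y ^+ a.+1) ^+ b.+1.
Proof.
move=> c_ge1 y_ge1; have ya_ge1 : 1 <= y ^+ a.+1 by apply: exprn_ege1.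
apply: le_trans (_ : (y ^+ a.+1) ^+ b.+1 <= _).
  by rewrite -exprM; apply: ler_weXn2l => //; nia.
by apply: lerXn2r; rewrite ?nnegrE; nra.
Qed.

End Gain.

Section Ell.
Context {R : realFieldType} {m : nat} {r : nat -> nat} {g : nat -> R} {kappa : R}.
Local Notation ell := (ell m r g kappa).

Lemma ell_top : ell m = g m * kappa.
Proof. by rewrite /ell subnn. Qed.

Lemma ellS i : (i < m)%N -> ell i = g i * ell i.+1 ^+ (r i.+1 - r i + 1).
Proof.
move=> lt_im; rewrite /ell.
have -> : (m - i = (m - i.+1).+1)%N by lia.
by rewrite /= (_ : (m - (m - i.+1).+1 = i)%N) //; lia.
Qed.

Hypothesis g_ge1 : forall i, (1 <= i <= m)%N -> 1 <= g i.
Hypothesis kappa_ge1 : 1 <= kappa.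

Lemma ell_ge_kappa i : (1 <= i <= m)%N -> kappa <= ell i.
Proof.
have kappa_ge0 : 0 <= kappa := le_trans ler01 kappa_ge1.
move En : (m - i)%N => n; elim: n i En => [|n IH] i hn him.
  have -> : i = m by lia.
  by rewrite ell_top; apply: ler_peMl => //; apply: g_ge1; lia.
rewrite ellS; last by lia.
have kY : kappa <= ell i.+1 by apply: IH; lia.
have Y_le : ell i.+1 <= ell i.+1 ^+ (r i.+1 - r i + 1).
  by apply: ler_eXnr; [rewrite addn1 | exact: le_trans kappa_ge1 kY].
apply: (le_trans kY (le_trans Y_le (ler_peMl _ _))); last exact: g_ge1.
exact/exprn_ge0/(le_trans kappa_ge0 kY).
Qed.

Lemma ell_ge1 i : (1 <= i <= m)%N -> 1 <= ell i.
Proof. by move=> /ell_ge_kappa; apply: le_trans. Qed.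

Lemma ell_ge0 i : (1 <= i <= m)%N -> 0 <= ell i.
Proof. by move=> /ell_ge1; apply: le_trans. Qed.

Lemma ell_exp_ge_kappa i n : (1 <= i <= m)%N -> (0 < n)%N -> kappa <= ell i ^+ n.
Proof.
move=> i_in n_gt0.
apply: le_trans (ell_ge_kappa _ i_in) _.
exact: ler_eXnr n_gt0 (ell_ge1 _ i_in).
Qed.

Hypothesis r_mono : forall i j, (1 <= i)%N -> (i <= j)%N -> (j <= m)%N -> (r i <= r j)%N.

Lemma ell_exp_step i j : (1 <= i)%N -> (i <= j)%N -> (j < m)%N ->
  ell j.+1 ^+ (r j.+1 - r i + 1) <= ell j ^+ (r j - r i + 1).
Proof.
move=> i_ge1 le_ij lt_jm; rewrite [ell j]ellS //.
have r_ij : (r i <= r j)%N by apply: r_mono; lia.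
have r_jSj : (r j <= r j.+1)%N by apply: r_mono; lia.
rewrite !addn1 (_ : (r j.+1 - r i = (r j.+1 - r j) + (r j - r i))%N); last by lia.
by apply: expr_le_mul_exprS; [apply: g_ge1 | apply: ell_ge1]; lia.
Qed.

Lemma ell_exp_le i j : (1 <= i)%N -> (i < j <= m)%N ->
  ell j ^+ (r j - r i + 1) <= ell i.+1 ^+ (r i.+1 - r i + 1).
Proof.
move=> i_ge1; elim: j => [|j IH] //.
rewrite ltnS leq_eqVlt => /andP[/orP[/eqP <- // | lt_ij] le_Sjm].
apply: le_trans (IH _); last by rewrite lt_ij ltnW.
exact: ell_exp_step (ltnW lt_ij) le_Sjm.
Qed.

Lemma sum_ell_exp_le (c : nat -> R) i : (1 <= i)%N ->
  (forall j, (i < j <= m)%N -> 0 <= c j) ->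
  \sum_(i.+1 <= j < m.+1) c j * ell j ^+ (2 * (r j - r i + 1))
    <= (\sum_(i.+1 <= j < m.+1) c j) * (ell i.+1 ^+ (r i.+1 - r i + 1)) ^+ 2.
Proof.
move=> i_ge1 c_ge0; rewrite mulr_suml !big_nat.
apply: ler_sum => j /andP[lt_ij lt_jSm]; have jm : (i < j <= m)%N by rewrite lt_ij.
apply: ler_wpM2l; first exact: c_ge0.
rewrite mulnC exprM lerXn2r ?ell_exp_le // nnegrE exprn_ge0 // ell_ge0 //; lia.
Qed.

End Ell.

(* normP j stands for the matrix norm |P_j| (any nonnegative real). *)
Theorem lemma4 (R : realFieldType) (m : nat) (r : nat -> nat)
    (lam : nat -> R) (normP : nat -> R) (iota : nat -> nat -> R) (rho0 : R) :
  (1 <= m)%N ->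
  (forall i, (1 <= i <= m)%N -> (0 < r i)%N) ->
  (forall i j, (1 <= i)%N -> (i <= j)%N -> (j <= m)%N -> (r i <= r j)%N) ->
  (forall i, (1 <= i <= m)%N -> 0 < lam i) ->
  (forall j, (1 <= j <= m)%N -> 0 <= normP j) ->
  (forall i j, (1 <= i)%N -> (i < j)%N -> (j <= m)%N -> 0 < iota j i) ->
  0 <= rho0 ->
  exists g : nat -> R,
    (forall i, (1 <= i <= m)%N -> 0 < g i) /\
    exists theta : R, 1 < theta /\
      forall kappa : R, theta <= kappa ->
        lam m / 2 * (ell m r g kappa m) ^+ 2 - rho0 >= kappa * ell m r g kappa m /\
        forall i, (1 <= i)%N -> (i <= m - 1)%N ->
          lam i / 4 * (ell m r g kappa i) ^+ 2
          - (\sum_(i.+1 <= j < m.+1)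
               (2 * (j - 1)%:R * normP j ^+ 2 * iota j i ^+ 2 / lam j
                * (ell m r g kappa j) ^+ (2 * (r j - r i + 1))%N))
          - rho0 >= kappa * ell m r g kappa i.
Proof.
move=> m_ge1 _ r_mono lam_gt0 normP_ge0 iota_gt0 rho0_ge0.
pose c i j := 2 * (j - 1)%:R * normP j ^+ 2 * iota j i ^+ 2 / lam j.
pose S i := \sum_(i.+1 <= j < m.+1) c i j.
have c_ge0 i j : (1 <= i)%N -> (i < j <= m)%N -> 0 <= c i j.
  move=> i_ge1 /andP[lt_ij le_jm].
  have lam_j : 0 < lam j by apply: lam_gt0; lia.
  have iota_ji : 0 < iota j i by apply: iota_gt0.
  have normP_j : 0 <= normP j by apply: normP_ge0; lia.
  by rewrite /c divr_ge0 ?(ltW lam_j) // !mulr_ge0 ?exprn_ge0 ?ler0n ?(ltW iota_ji).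
have S_ge0 i : (1 <= i)%N -> 0 <= S i.
  by move=> i_ge1; rewrite /S big_nat sumr_ge0 // => j /andP[lt_ij ?]; apply: c_ge0; lia.
pose g i := gain (lam i) (S i) rho0.
have g_ge1 i : (1 <= i <= m)%N -> 1 <= g i.
  by move=> him; apply: gain_ge1; [apply: lam_gt0 | apply: S_ge0; lia |].
exists g; split=> [i /g_ge1 | ]; first lra.
exists 2; split=> [|kappa kappa_ge2]; first lra.
have kappa_ge1 : 1 <= kappa by lra.
split=> [|i i_ge1 le_im1].
  have m_in : (1 <= m <= m)%N by rewrite m_ge1 leqnn.
  rewrite ell_top; exact: gain_dominates_top (lam_gt0 m m_in) (S_ge0 m m_ge1) rho0_ge0 kappa_ge1.
have i_in : (1 <= i <= m)%N by lia.
set X := ell m r g kappa i.+1 ^+ (r i.+1 - r i + 1).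
have kappa_leX : kappa <= X by apply: ell_exp_ge_kappa; rewrite ?addn1 //; lia.
have X_ge1 : 1 <= X by apply: le_trans kappa_ge1 kappa_leX.
have := gain_dominates (lam_gt0 i i_in) (S_ge0 i i_ge1) rho0_ge0 X_ge1 kappa_leX.
rewrite -/(g i) -ellS; last by lia.
have := sum_ell_exp_le g_ge1 kappa_ge1 r_mono (c i) i i_ge1 (c_ge0 i ^~ i_ge1).
rewrite -/(S i) -/X.
lra.
Qed.
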